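(* For all integers $r \geq 3$ and $k \geq 3$, we have $s_r(K_k) \geq s_{r-1}(K_k)$.
   Context: All graphs are finite and simple. For graphs $G,H$ and an integer $r\ge 1$, write $G \rightarrow (H)_r$ if every colouring of the edges of $G$ with $r$ colours contains a monochromatic copy of $H$. A graph $G$ is $r$-Ramsey-minimal for $H$ if $G \rightarrow (H)_r$ but no proper subgraph $G'\subsetneq G$ satisfies $G' \rightarrow (H)_r$. Define $s_r(H) := \min \delta(G)$ over all graphs $G$ that are $r$-Ramsey-minimal for $H$, where $\delta$ denotes minimum degree. *)

From mathcomp Require Import all_boot.
Set Implicit Arguments. Unset Strict Implicit. Unset Printing Implicit Defensive.

Definition simple_graph (V : finType) (e : rel V) : Prop :=
  symmetric e /\ irreflexive e.

(* An r-edge-colouring: each unordered pair {u,v} gets one colour in 'I_r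
   (colours of non-edges are irrelevant). *)
Definition edge_colouring (V : finType) (r : nat) (c : V -> V -> 'I_r) : Prop :=
  forall u v, c u v = c v u.

Definition mono_clique (V : finType) (e : rel V) (r k : nat)
  (c : V -> V -> 'I_r) : Prop :=
  exists (f : 'I_k -> V) (col : 'I_r), injective f /\
    forall i j : 'I_k, i != j -> e (f i) (f j) /\ c (f i) (f j) = col.

Definition arrows (V : finType) (e : rel V) (r k : nat) : Prop :=
  forall c : V -> V -> 'I_r, edge_colouring c -> @mono_clique V e r k c.

Definition subgraph_rel (V : finType) (S : {set V}) (e' : rel V) :
  rel {x : V | x \in S} := fun x y => e' (val x) (val y).

Definition proper_subgraph (V : finType) (e : rel V) (S : {set V}) (e' : rel V) : Prop :=
  simple_graph e' /\ (forall u v, e' u v -> e u v) /\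
  (S != setT \/ exists u v, e u v /\ ~~ e' u v).

Definition ramsey_minimal (V : finType) (e : rel V) (r k : nat) : Prop :=
  simple_graph e /\ @arrows V e r k /\
  forall (S : {set V}) (e' : rel V), proper_subgraph e S e' ->
    ~ @arrows _ (@subgraph_rel V S e') r k.

(* minimum degree (for nonempty V; the seed #|V| exceeds every degree). *)
Definition min_degree (V : finType) (e : rel V) : nat :=
  \big[minn/#|V|]_(v : V) #|[set u | e v u]|.

(* Let G be r-Ramsey-minimal for K_k and v a vertex of minimum degree. By
   minimality G - v admits an r-colouring without monochromatic K_k. Deleting
   from G the edges of G - v in the last colour leaves a graph G' that still
   arrows K_k with r - 1 colours: an (r-1)-colouring of G' together with the
   deleted colour class is an r-colouring of G, whose monochromatic K_k cannot
   lie in the deleted class. Any (r-1)-Ramsey-minimal subgraph H of G' contains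
   v, for otherwise H lies in G - v and avoids the last colour, so the colouring
   of G - v would have r - 1 colours on H and no monochromatic K_k there. Hence
   delta(H) <= deg_H v <= deg_G v = delta(G). *)
From HB Require Import structures.
From mathcomp Require Import all_boot.
From Stdlib Require Import Classical.
From Stdlib Require Wf_nat.
Set Implicit Arguments. Unset Strict Implicit. Unset Printing Implicit Defensive.

Lemma ex_min_measure (T : Type) (m : T -> nat) (P : T -> Prop) :
  (exists x, P x) -> exists x, P x /\ forall y, P y -> m x <= m y.
Proof.
move=> [x Px].
have [n [[[y [Py <-]] least] _]] :=
  Wf_nat.dec_inh_nat_subset_has_unique_least_element
    (fun n => exists y, P y /\ m y = n) (fun n => classic _)
    (ex_intro _ _ (ex_intro _ x (conj Px erefl))).
by exists y; split=> // z Pz; apply/leP/least; exists z.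
Qed.

Lemma mono_clique_hom (V1 V2 : finType) (e1 : rel V1) (e2 : rel V2) (r1 r2 k : nat)
    (c1 : V1 -> V1 -> 'I_r1) (c2 : V2 -> V2 -> 'I_r2) (h : V1 -> V2) (g : 'I_r1 -> 'I_r2) :
  injective h ->
  (forall x y, e1 x y -> e2 (h x) (h y) /\ c2 (h x) (h y) = g (c1 x y)) ->
  mono_clique e1 k c1 -> mono_clique e2 k c2.
Proof.
move=> h_inj h_hom [f [col [f_inj f_mono]]].
exists (h \o f), (g col); split; first exact: inj_comp.
move=> i j ij; have [eij <-] := f_mono i j ij; exact: h_hom.
Qed.

Lemma arrows_hom (V1 V2 : finType) (e1 : rel V1) (e2 : rel V2) (r k : nat) (h : V1 -> V2) :
  injective h -> (forall x y, e1 x y -> e2 (h x) (h y)) ->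
  arrows e1 r k -> arrows e2 r k.
Proof.
move=> h_inj h_hom e1_arrows c c_sym.
apply: (mono_clique_hom (e1 := e1) (c1 := fun x y => c (h x) (h y)) (g := id) h_inj).
  by move=> x y /h_hom; split.
by apply: e1_arrows => x y; apply: c_sym.
Qed.

Definition induced_rel (V : finType) (S : {set V}) (e : rel V) : rel V :=
  fun x y => [&& x \in S, y \in S & e x y].

Lemma mono_clique_induced_rel (V : finType) (S : {set V}) (e : rel V) (r k : nat)
    (c : V -> V -> 'I_r) (cS : {x | x \in S} -> {x | x \in S} -> 'I_r) :
  1 < k -> (forall a b, c (val a) (val b) = cS a b) ->
  mono_clique (induced_rel S e) k c -> mono_clique (@subgraph_rel _ S e) k cS.
Proof.
move=> k_gt1 c_cS [f [col [f_inj f_mono]]].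
(* As k > 1, every vertex of the clique lies on one of its edges, hence in S. *)
have fS i : f i \in S.
  have [j ij] : exists j, i != j.
    case: (eqVneq i (Ordinal (ltnW k_gt1))) => [->|]; last by exists (Ordinal (ltnW k_gt1)).
    by exists (Ordinal k_gt1); apply/eqP => /(congr1 val).
  by have [/and3P [] ] := f_mono i j ij.
exists (fun i => Sub (f i) (fS i)), col; split.
  by move=> i j /(congr1 val); rewrite !SubK => /f_inj.
move=> i j ij; have [/and3P [_ _ eij] <-] := f_mono i j ij.
by rewrite /subgraph_rel -c_cS !SubK.
Qed.

Lemma not_arrows_subgraph_rel (V : finType) (S : {set V}) (e : rel V) (r k : nat) :
  1 < k -> ~ arrows (@subgraph_rel _ S e) r.+1 k ->
  exists c : V -> V -> 'I_r.+1,
    edge_colouring c /\ ~ mono_clique (induced_rel S e) k c.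
Proof.
move=> k_gt1 not_arrows.
have [cS [cS_sym cS_free]] : exists cS : {x | x \in S} -> _ -> 'I_r.+1,
    edge_colouring cS /\ ~ mono_clique (@subgraph_rel _ S e) k cS.
  apply: NNPP => no_bad; apply: not_arrows => cS cS_sym.
  by apply: NNPP => cS_free; apply: no_bad; exists cS.
pose c x y := if insub x is Some a then if insub y is Some b then cS a b else ord0
              else ord0 : 'I_r.+1.
exists c; split.
  move=> x y; rewrite /c.
  by case: (insub x) => [a|]; case: (insub y) => [b|] //; apply: cS_sym.
have c_cS a b : c (val a) (val b) = cS a b by rewrite /c !valK.
by move/(mono_clique_induced_rel k_gt1 c_cS).
Qed.

Section MinimalSubgraph.
Variables (V : finType) (r k : nat).

Definition edge_pairs (S : {set V}) (e : rel V) : {set V * V} :=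
  [set p | [&& p.1 \in S, p.2 \in S & e p.1 p.2]].

Definition subgraph_size (S : {set V}) (e : rel V) : nat := #|S| + #|edge_pairs S e|.

Section LiftRel.
Variable S : {set V}.
Local Notation W := {x : V | x \in S}.

Definition lift_rel (f : rel W) : rel V :=
  fun x y => if insub x is Some a then if insub y is Some b then f a b else false
             else false.

Lemma lift_relE (f : rel W) (a b : W) : lift_rel f (val a) (val b) = f a b.
Proof. by rewrite /lift_rel !valK. Qed.

Lemma lift_rel_simple (f : rel W) : simple_graph f -> simple_graph (lift_rel f).
Proof.
move=> [f_sym f_irr]; split=> [x y|x]; rewrite /lift_rel.
  by case: (insub x : option W) => [a|]; case: (insub y : option W) => [b|] //; apply: f_sym.
by case: (insub x : option W) => [a|] //; apply: f_irr.
Qed.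

Lemma lift_rel_sub (e : rel V) (f : rel W) :
  subrel f (@subgraph_rel _ S e) -> subrel (lift_rel f) e.
Proof.
move=> fe x y; rewrite /lift_rel.
by case: insubP => // a _ <-; case: insubP => // b _ <-; apply: fe.
Qed.

Lemma arrows_lift_rel (T : {set W}) (f : rel W) :
  arrows (@subgraph_rel _ T f) r k ->
  arrows (@subgraph_rel _ (val @: T) (lift_rel f)) r k.
Proof.
apply: (arrows_hom (h := fun t => Sub (val (val t)) (imset_f val (valP t)))).
  by move=> t t' /(congr1 val); rewrite !SubK => /val_inj/val_inj.
by move=> t t'; rewrite /subgraph_rel !SubK lift_relE.
Qed.

Lemma subgraph_size_lift_rel (e : rel V) (T : {set W}) (f : rel W) :
  proper_subgraph (@subgraph_rel _ S e) T f ->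
  subgraph_size (val @: T) (lift_rel f) < subgraph_size S e.
Proof.
move=> [_ [fe T_proper]].
have T_S : val @: T \subset S by apply/subsetP => _ /imsetP [a _ ->]; apply: valP.
have E_sub : edge_pairs (val @: T) (lift_rel f) \subset edge_pairs S e.
  apply/subsetP => -[x y]; rewrite !inE /=.
  case/and3P => /imsetP [a _ ->] /imsetP [b _ ->].
  by rewrite lift_relE (valP a) (valP b) => /fe.
rewrite /subgraph_size; case: T_proper => [T_neq | [u [w [euw not_fuw]]]].
  rewrite -addSn leq_add ?subset_leq_card // card_imset; last exact: val_inj.
  have : #|T| < #|[set: W]| by apply: proper_card; rewrite properT.
  by rewrite cardsT card_sig.
rewrite -addnS leq_add ?subset_leq_card //; apply: proper_card; apply/properP.
split=> //; exists (val u, val w); rewrite !inE /= ?(valP u) ?(valP w) //.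
by rewrite lift_relE (negbTE not_fuw) !andbF.
Qed.

End LiftRel.

Lemma ramsey_minimal_subgraph (e : rel V) :
  simple_graph e -> arrows e r k ->
  exists (S : {set V}) (e' : rel V),
    subrel e' e /\ ramsey_minimal (@subgraph_rel _ S e') r k.
Proof.
move=> e_simple e_arrows.
pose arrowing (Se : {set V} * rel V) :=
  [/\ simple_graph Se.2, subrel Se.2 e & arrows (@subgraph_rel _ Se.1 Se.2) r k].
have e_arrowing : arrowing (setT, e).
  split=> //; apply: (arrows_hom (h := fun x => Sub x (in_setT x))) e_arrows.
    by move=> x y /(congr1 val); rewrite !SubK.
  by move=> x y; rewrite /subgraph_rel !SubK.
have [[S e'] [[[e'_sym e'_irr] e'e S_arrows] S_min]] :=
  ex_min_measure (fun Se => subgraph_size Se.1 Se.2) (ex_intro arrowing _ e_arrowing).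
exists S, e'; split=> //; split; first by split=> [x y|x]; [apply: e'_sym | apply: e'_irr].
split=> // T f f_proper T_arrows.
have lift_arrowing : arrowing (val @: T, lift_rel f).
  case: f_proper => f_simple [fe _]; split=> //=; last exact: arrows_lift_rel.
    exact: lift_rel_simple.
  by move=> x y /(lift_rel_sub fe); apply: e'e.
by have := S_min _ lift_arrowing; rewrite leqNgt subgraph_size_lift_rel.
Qed.

End MinimalSubgraph.

(* [minn] has no unit on nat (the seed of [min_degree] is not one), but being
   associative and commutative is enough for [bigD1_seq]. *)
HB.instance Definition _ := SemiGroup.isComLaw.Build nat minn minnA minnC.

Definition degree (V : finType) (e : rel V) (v : V) : nat := #|[set u | e v u]|.

Lemma min_degree_le_degree (V : finType) (e : rel V) (v : V) : min_degree e <= degree e v.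
Proof. by rewrite /min_degree (bigD1_seq v) ?mem_index_enum ?index_enum_uniq //= geq_minl. Qed.

Lemma min_degree_attained (V : finType) (e : rel V) (x0 : V) :
  exists v, min_degree e = degree e v.
Proof.
case: (arg_minnP (degree e) (erefl : predT x0)) => v _ v_min.
exists v; apply/eqP; rewrite eqn_leq min_degree_le_degree /min_degree.
by apply: (big_ind (leq (degree e v))) => // [|m n]; [apply: max_card | rewrite leq_min => ->].
Qed.

Lemma degree_subgraph_rel (V : finType) (S : {set V}) (e e' : rel V) (a : {x | x \in S}) :
  subrel e' e -> degree (@subgraph_rel _ S e') a <= degree e (val a).
Proof.
move=> e'e; rewrite /degree -(card_imset _ val_inj); apply/subset_leq_card/subsetP.
by move=> _ /imsetP [b + ->]; rewrite !inE; apply: e'e.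
Qed.

Lemma ramsey_minimal_not_arrows_setC1 (V : finType) (e : rel V) (r k : nat) (v : V) :
  ramsey_minimal e r k -> ~ arrows (@subgraph_rel _ [set~ v] e) r k.
Proof.
move=> [e_simple [_ e_min]]; apply: e_min; split=> //; split=> //.
by left; apply/eqP => /setP/(_ v); rewrite !inE eqxx.
Qed.

Section DeleteColourClass.
Variables (V : finType) (e : rel V) (n k : nat) (v : V) (c : V -> V -> 'I_n.+2).
Hypotheses (c_sym : edge_colouring c) (c_free : ~ mono_clique (induced_rel [set~ v] e) k c).

Definition deleted_edge (x y : V) : bool := [&& x != v, y != v & c x y == ord_max].

Definition del_colour_class : rel V := fun x y => e x y && ~~ deleted_edge x y.

Lemma deleted_edge_sym : symmetric deleted_edge.
Proof. by move=> x y; rewrite /deleted_edge c_sym andbCA. Qed.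

Lemma del_colour_class_simple : simple_graph e -> simple_graph del_colour_class.
Proof.
move=> [e_sym e_irr]; split=> [x y|x]; rewrite /del_colour_class.
  by rewrite e_sym deleted_edge_sym.
by rewrite e_irr.
Qed.

Lemma arrows_del_colour_class : arrows e n.+2 k -> arrows del_colour_class n.+1 k.
Proof.
move=> e_arrows c1 c1_sym.
pose c2 x y := if deleted_edge x y then ord_max else lift ord_max (c1 x y).
have c2_sym : edge_colouring c2 by move=> x y; rewrite /c2 deleted_edge_sym c1_sym.
have [f [col [f_inj f_mono]]] := e_arrows c2 c2_sym.
move: f_mono; case: (unliftP ord_max col) => [col' -> | ->] f_mono.
  exists f, col'; split=> // i j ij; have [eij] := f_mono i j ij; rewrite /c2.
  case: ifP => [_ /eqP | not_deleted /lift_inj ->].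
    by rewrite (negbTE (neq_lift _ _)).
  by rewrite /del_colour_class eij not_deleted.
exfalso; apply: c_free; exists f, ord_max; split=> // i j ij.
have [eij] := f_mono i j ij; rewrite /c2.
case: ifP => [/and3P [fi_v fj_v /eqP c_max] _ | _ /eqP]; last first.
  by rewrite eq_sym (negbTE (neq_lift _ _)).
by rewrite /induced_rel !inE fi_v fj_v eij c_max.
Qed.

Lemma del_colour_class_arrowing_mem (S : {set V}) (e' : rel V) :
  subrel e' del_colour_class -> arrows (@subgraph_rel _ S e') n.+1 k -> v \in S.
Proof.
move=> e'_sub S_arrows; case: (boolP (v \in S)) => // vS; exfalso.
pose cS (a b : {x | x \in S}) := odflt ord0 (unlift ord_max (c (val a) (val b))).
have cS_sym : edge_colouring cS by move=> a b; rewrite /cS c_sym.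
apply/c_free/(mono_clique_hom (h := val) (g := lift ord_max) val_inj _ (S_arrows cS cS_sym)).
move=> a b /e'_sub /andP [e_ab not_deleted].
have val_v (x : {x | x \in S}) : val x != v by apply/eqP => xv; move: vS; rewrite -xv (valP x).
split; first by rewrite /induced_rel !inE !val_v e_ab.
move: not_deleted; rewrite /deleted_edge !val_v /= /cS.
by case: (unliftP ord_max (c (val a) (val b))) => [j ->|->] //; rewrite eqxx.
Qed.

End DeleteColourClass.

Theorem mainTheorem10 (r k : nat) (hr : 3 <= r) (hk : 3 <= k)
  (V : finType) (e : rel V) :
  ramsey_minimal e r k ->
  exists (W : finType) (e' : rel W),
    ramsey_minimal e' r.-1 k /\ min_degree e' <= min_degree e.
Proof.
case: r hr => [|[|n]] // _ G_min; have [G_simple [G_arrows _]] := G_min.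
have k_gt1 : 1 < k := ltnW hk.
have [f _] := G_arrows (fun _ _ => ord0) (fun _ _ => erefl).
have [v deg_v] := min_degree_attained e (f (Ordinal (ltnW k_gt1))).
have [c [c_sym c_free]] :=
  not_arrows_subgraph_rel k_gt1 (ramsey_minimal_not_arrows_setC1 (v := v) G_min).
have [S [e' [e'_sub H_min]]] := ramsey_minimal_subgraph
  (del_colour_class_simple v c_sym G_simple) (arrows_del_colour_class c_sym c_free G_arrows).
have vS := del_colour_class_arrowing_mem c_sym c_free e'_sub H_min.2.1.
exists {x | x \in S}, (@subgraph_rel _ S e'); split; first exact: H_min.
have e'e : subrel e' e by move=> x y /e'_sub /andP [].
rewrite deg_v; apply: leq_trans (min_degree_le_degree _ (Sub v vS)) _.
by have := degree_subgraph_rel (Sub v vS) e'e; rewrite SubK.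
Qed.
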